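(* Let $\mathcal A\in\mathbb R^{n_1}\otimes\cdots\otimes\mathbb R^{n_k}$, $1\le s\le k$, $r\le\min\{n_1,\dots,n_s\}$, and consider the problem $\mathrm{mLRPOTA}(r)$. At every feasible point of this problem, the linear independence constraint qualification holds, i.e. the gradients of the constraint functions are linearly independent. In particular, at any local maximizer $U$ the KKT conditions hold and the set of Lagrange multipliers associated with $U$ is a singleton.
   Context: Problem $\mathrm{mLRPOTA}(r)$: maximize $\sum_{j=1}^r\big(((U^{(1)})^{\mathsf T},\dots,(U^{(k)})^{\mathsf T})\cdot\mathcal A\big)_{j\cdots j}^2=\sum_{j=1}^r\langle\mathcal A,\mathbf u^{(1)}_j\otimes\cdots\otimes\mathbf u^{(k)}_j\rangle^2$ over $U=(U^{(1)},\dots,U^{(k)})$, $U^{(i)}\in\mathbb R^{n_i\times r}$ with columns $\mathbf u^{(i)}_j$, subject to the equality constraints $(U^{(i)})^{\mathsf T}U^{(i)}=I_r$ for $i=1,\dots,s$ (the entries $(a,b)$, $a\le b$, of the symmetric matrix $(U^{(i)})^{\mathsf T}U^{(i)}-I_r$ being the constraint functions) and $((U^{(i)})^{\mathsf T}U^{(i)})_{jj}=1$ for $j=1,\dots,r$, $i=s+1,\dots,k$. *)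

From HB Require Import structures.
From mathcomp Require Import all_boot all_order all_algebra.
From mathcomp Require Import all_classical all_reals all_analysis.
Set Implicit Arguments. Unset Strict Implicit. Unset Printing Implicit Defensive.
Import Order.TTheory GRing.Theory Num.Theory.
Local Open Scope ring_scope.

Section MLRPOTA.
Variables (R : realType) (k : nat) (n : 'I_k -> nat) (r : nat).

Definition tindex := {dffun forall i : 'I_k, 'I_(n i)}.
Definition tensor := {ffun tindex -> R}.
Definition var := forall i : 'I_k, 'M[R]_(n i, r).

Definition tcontract (A : tensor) (U : var) (j : 'I_r) : R :=
  \sum_(idx : tindex) A idx * \prod_(i < k) U i (idx i) j.

Definition objective (A : tensor) (U : var) : R :=
  \sum_(j < r) (tcontract A U j) ^+ 2.

(* constraint labels (i, a, b) (0-indexed modes): for mode i < s all (a,b)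
   with a <= b; for mode i >= s only the diagonal a = b *)
Definition cvalid (s : nat) (c : 'I_k * 'I_r * 'I_r) : bool :=
  let: (i, a, b) := c in
  if (i < s)%N then (a <= b)%N else a == b.

Definition clabel (s : nat) := {c : 'I_k * 'I_r * 'I_r | cvalid s c}.

Definition cfun (c : 'I_k * 'I_r * 'I_r) (U : var) : R :=
  let: (i, a, b) := c in ((U i)^T *m U i) a b - (a == b)%:R.

Definition feasible (s : nat) (U : var) : Prop :=
  forall c : clabel s, cfun (val c) U = 0.

Definition var_shift (U V : var) (t : R) : var := fun i => U i + t *: V i.

(* directional derivative of f at U in direction V, i.e. <grad f(U), V> *)
Definition dirderiv (f : var -> R) (U V : var) : R :=
  derive1 (fun t : R => f (var_shift U V t)) 0.

Definition LICQ (s : nat) (U : var) : Prop :=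
  forall lam : {ffun clabel s -> R},
    (forall V : var, \sum_(c : clabel s) lam c * dirderiv (cfun (val c)) U V = 0) ->
    forall c, lam c = 0.

Definition KKT (s : nat) (A : tensor) (U : var) (lam : {ffun clabel s -> R}) : Prop :=
  feasible s U /\
  forall V : var,
    dirderiv (objective A) U V = \sum_(c : clabel s) lam c * dirderiv (cfun (val c)) U V.

Definition local_maximizer (s : nat) (A : tensor) (U : var) : Prop :=
  feasible s U /\
  exists e : R, 0 < e /\
    forall V : var, feasible s V ->
      (forall i p j, `|V i p j - U i p j| < e) -> objective A V <= objective A U.

End MLRPOTA.

From HB Require Import structures.
From mathcomp Require Import all_boot all_order all_algebra.
From mathcomp Require Import all_classical all_reals all_analysis.
From mathcomp.algebra_tactics Require Import ring lra.
Import Order.TTheory GRing.Theory Num.Theory numFieldNormedType.Exports.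

Set Implicit Arguments.
Unset Strict Implicit.

Local Open Scope classical_set_scope.
Local Open Scope ring_scope.

(** LICQ: at a feasible point, moving column b of U^(i) along column a changes,
    to first order, only the constraint (i, a, b), because the columns are
    orthonormal (resp. of unit norm); testing a vanishing combination of
    constraint gradients against this direction isolates each coefficient.

    KKT: let G^(i) be the partial gradient of the objective in U^(i) and
    M^(i) = U^(i)T G^(i).  At a local maximizer the derivative of the objective
    vanishes along every feasible curve through U (Fermat).  Rotating two columns
    of an orthonormal factor into each other shows that M^(i) is symmetric;
    rotating one column towards the residual W = G^(i) - U^(i) K, which is
    orthogonal to the columns it has to stay orthogonal to, shows W = 0, where
    K = M^(i) for orthonormal modes and K = diag M^(i) otherwise.  Hence the
    gradient of the objective is the combination of the constraint gradients with
    multipliers M^(i)_ab (a < b) and M^(i)_aa / 2, and LICQ makes them unique. *)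

(** * Calculus on the real line *)

Section Calculus.
Context {R : realFieldType}.
Implicit Types (f : R -> R) (c d q t x : R).

Lemma is_derive_local_max f c d :
  is_derive c 1 f d -> (\forall t \near c, f t <= f c) -> d = 0.
Proof.
move=> [fd <-] /nbhs0P cmax.
have fdec : \forall h \near 0, f (h *: 1 + c) - f c <= 0.
  by near=> h; rewrite subr_le0 [_ *: 1]mulr1 addrC; near: h; exact: cmax.
apply/eqP; rewrite eq_le; apply/andP; split.
- apply: (ler_cvg_to (cvg_dnbhs_at_right fd) (cvg_cst 0)).
  near=> h; apply: mulr_ge0_le0.
    by rewrite invr_ge0 ltW //; near: h; exact: nbhs_right_gt.
  by near: h; exact: cvg_within fdec.
- apply: (ler_cvg_to (cvg_cst 0) (cvg_dnbhs_at_left fd)).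
  near=> h; apply: mulr_le0.
    by rewrite invr_le0 ltW //; near: h; exact: nbhs_left_lt.
  by near: h; exact: cvg_within fdec.
Unshelve. all: by end_near. Qed.

Lemma is_derive_big_sum {I : Type} (s : seq I) (P : pred I) (h : I -> R -> R)
    (dh : I -> R) x :
  (forall i, is_derive x 1 (h i) (dh i)) ->
  is_derive x 1 (fun t => \sum_(i <- s | P i) h i t) (\sum_(i <- s | P i) dh i).
Proof.
move=> hd; rewrite -fct_sumE.
by elim/big_ind2: _ => // *; [exact: is_derive_cst | exact: is_deriveD].
Qed.

Lemma is_derive_big_prod {I : eqType} (s : seq I) (h : I -> R -> R) (dh : I -> R) x :
  uniq s -> (forall i, is_derive x 1 (h i) (dh i)) ->
  is_derive x 1 (fun t => \prod_(i <- s) h i t)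
    (\sum_(m <- s) dh m * \prod_(i <- s | i != m) h i x).
Proof.
move=> + hd; rewrite -fct_prodE; elim: s => [_ | a s IH /= /andP[as_ us]].
  by rewrite !big_nil; exact: is_derive_cst.
rewrite big_cons; apply: is_derive_eq; first exact: is_deriveM (hd a) (IH us).
have drop_a : \prod_(i <- s | i != a) h i x = \prod_(i <- s) h i x.
  rewrite big_seq_cond [RHS]big_seq; apply: eq_bigl => i.
  by case: eqP => [->|]; rewrite ?andbT ?andbF // (negbTE as_).
rewrite big_cons [in RHS]big_cons eqxx /= drop_a fct_prodE addrC mulrC /=.
congr (_ + _); rewrite scaler_sumr [LHS]big_seq [RHS]big_seq; apply: eq_bigr => m ms.
rewrite big_cons (_ : a != m) /=; last by apply: contraNneq as_ => ->.
exact: mulrCA.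
Qed.

(** The rational parametrization of the ellipse c^2 + q s^2 = 1 (stereographic
    projection from (-1, 0)); unlike cos and sin it needs no normalization of q,
    which may be 0. *)
Definition circ_cos q t : R := (1 - t ^+ 2 * q) / (1 + t ^+ 2 * q).
Definition circ_sin q t : R := 2 * t / (1 + t ^+ 2 * q).

Lemma circ_denom_gt0 t q : 0 <= q -> 0 < 1 + t ^+ 2 * q.
Proof. by move=> q0; rewrite (lt_le_trans ltr01) // lerDl mulr_ge0 ?sqr_ge0. Qed.

Lemma circ_cos_sin q t : 0 <= q -> circ_cos q t ^+ 2 + q * circ_sin q t ^+ 2 = 1.
Proof.
move=> q0; have /lt0r_neq0 den0 := circ_denom_gt0 t q0.
by rewrite /circ_cos /circ_sin; field.
Qed.

Lemma circ_cos0 q : circ_cos q 0 = 1.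
Proof. by rewrite /circ_cos expr0n /= mul0r subr0 addr0 divr1. Qed.

Lemma circ_sin0 q : circ_sin q 0 = 0.
Proof. by rewrite /circ_sin mulr0 mul0r. Qed.

Lemma is_derive_circ_denom_inv q :
  is_derive (0:R) 1 (fun t => (1 + t ^+ 2 * q)^-1) 0.
Proof.
have den0 : 1 + 0 ^+ 2 * q != 0 :> R by rewrite expr0n mul0r addr0 oner_neq0.
apply: DeriveDef; first exact: derivableV.
by rewrite deriveV // derive_val !(scale0r, scaler0, addr0).
Qed.

Lemma is_derive_circ_cos q : is_derive (0:R) 1 (circ_cos q) 0.
Proof.
have dinv := is_derive_circ_denom_inv q.
rewrite /circ_cos; apply: is_derive_eq.
by rewrite !(scale0r, scaler0, subr0, addr0).
Qed.

Lemma is_derive_circ_sin q : is_derive (0:R) 1 (circ_sin q) 2.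
Proof.
have dinv := is_derive_circ_denom_inv q.
rewrite /circ_sin; apply: is_derive_eq.
by rewrite scaler0 add0r expr0n mul0r addr0 invr1 scale1r [_%:A]mulr1.
Qed.
End Calculus.

(** * Gram matrices and column rotations *)

Section DeltaProducts.
Variables (R : pzRingType) (m p q : nat).

Lemma mul_delta_mxE (i : 'I_m) (j : 'I_p) (G : 'M[R]_(p, q)) x y :
  (delta_mx i j *m G) x y = (x == i)%:R * G j y.
Proof.
rewrite mxE (bigD1 j) //= big1 => [|z /negbTE zj]; last by rewrite mxE zj andbF mul0r.
by rewrite mxE eqxx andbT addr0.
Qed.

Lemma mulmx_deltaE (G : 'M[R]_(m, p)) (i : 'I_p) (j : 'I_q) x y :
  (G *m delta_mx i j) x y = G x i * (y == j)%:R.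
Proof.
rewrite mxE (bigD1 i) //= big1 => [|z /negbTE zi]; last by rewrite mxE zi mulr0.
by rewrite mxE eqxx addr0.
Qed.

End DeltaProducts.

Section ColumnRotations.
Context {R : realFieldType} {m r : nat}.
Implicit Types (X Y : 'M[R]_(m, r)) (a b x y : 'I_r) (t : R).

Lemma trmx_mulmxE X Y x y : (X^T *m Y) x y = \sum_p X p x * Y p y.
Proof. by rewrite mxE; apply: eq_bigr => p _; rewrite mxE. Qed.

Lemma sum_combl (F G H : 'I_m -> R) (u v : R) :
  \sum_p (u * F p + v * G p) * H p =
  u * \sum_p F p * H p + v * \sum_p G p * H p.
Proof. by rewrite !mulr_sumr -big_split /=; apply: eq_bigr => p _; ring. Qed.

Lemma sum_combr (F G H : 'I_m -> R) (u v : R) :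
  \sum_p H p * (u * F p + v * G p) =
  u * \sum_p H p * F p + v * \sum_p H p * G p.
Proof. by rewrite !mulr_sumr -big_split /=; apply: eq_bigr => p _; ring. Qed.

Lemma trmx_mulmxC X Y x y : (X^T *m Y) x y = (Y^T *m X) y x.
Proof. by rewrite !trmx_mulmxE; apply: eq_bigr => p _; rewrite mulrC. Qed.

Lemma sum_mul_entries X Y : \sum_p \sum_j X p j * Y p j = \tr (X^T *m Y).
Proof. by rewrite exchange_big; apply: eq_bigr => j _; rewrite trmx_mulmxE. Qed.

Lemma gram_diag_eq0 X : (forall a, (X^T *m X) a a = 0) -> X = 0.
Proof.
move=> XX0; apply/matrixP => p a; rewrite mxE; apply/eqP; rewrite -sqrf_eq0 expr2.
have := XX0 a; rewrite trmx_mulmxE => /psumr_eq0P -> // q _.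
by rewrite -expr2 sqr_ge0.
Qed.

Lemma residual_eq0 (G : 'M[R]_(m, r)) X (K : 'M[R]_r) :
  (forall a, (G^T *m (G - X *m K)) a a = 0) ->
  (forall a, ((G - X *m K)^T *m X *m K) a a = 0) -> G - X *m K = 0.
Proof.
move=> GW WXK; apply: gram_diag_eq0 => a.
rewrite {2}[G - _]/(_ + _) mulmxDr mulmxN mulmxA mxE [X in _ + X]mxE WXK.
by rewrite -(trmx_mulmxC G) GW subrr.
Qed.

Lemma sum_mul_if1 (F : 'I_r -> R) a u :
  \sum_j F j * (if j == a then u else 0) = F a * u.
Proof. by rewrite (bigD1 a) //= eqxx big1 ?addr0 // => j /negbTE ->; rewrite mulr0. Qed.

Lemma sum_mul_if2 (F : 'I_r -> R) a b u v : a != b ->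
  \sum_j F j * (if j == a then u else if j == b then v else 0) = F a * u + F b * v.
Proof.
move=> ab; rewrite (bigD1 a) //= eqxx (bigD1 b) 1?eq_sym //= (negbTE ab) eqxx addrA.
by rewrite big1 ?addr0 // => j /andP[/negbTE -> /negbTE ->]; rewrite mulr0.
Qed.

Definition col_rotate X Y a t : 'M[R]_(m, r) :=
  let q := (Y^T *m Y) a a in
  \matrix_(p, j) (if j == a then circ_cos q t * X p a + circ_sin q t * Y p a else X p j).

Lemma col_rotate0 X Y a : col_rotate X Y a 0 = X.
Proof.
apply/matrixP => p j; rewrite mxE circ_cos0 circ_sin0 mul1r mul0r addr0.
by case: eqP => [->|].
Qed.

Lemma is_derive_col_rotate X Y a p j :
  is_derive (0:R) 1 (fun t => col_rotate X Y a t p j) (if j == a then 2 * Y p a else 0).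
Proof.
rewrite /col_rotate; under [fun t => _]funext do rewrite mxE.
case: ifP => _; last exact: is_derive_cst.
have dcos := is_derive_circ_cos ((Y^T *m Y) a a).
have dsin := is_derive_circ_sin ((Y^T *m Y) a a).
by apply: is_derive_eq; rewrite !scaler0 !add0r mulrC.
Qed.

Lemma col_rotate_gram_aa X Y a t :
  (X^T *m X) a a = 1 -> (Y^T *m X) a a = 0 ->
  ((col_rotate X Y a t)^T *m col_rotate X Y a t) a a = 1.
Proof.
have q_ge0 : 0 <= (Y^T *m Y) a a.
  by rewrite trmx_mulmxE sumr_ge0 // => p _; rewrite -expr2 sqr_ge0.
rewrite /col_rotate; move: q_ge0; set q := (Y^T *m Y) a a => q_ge0.
rewrite !trmx_mulmxE => XXaa YXaa; under eq_bigr do rewrite !mxE eqxx.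
have XYaa : \sum_p X p a * Y p a = 0.
  by rewrite -[RHS]YXaa; apply: eq_bigr => p _; rewrite mulrC.
have YYaa : \sum_p Y p a * Y p a = q by rewrite /q trmx_mulmxE.
rewrite sum_combl !sum_combr XXaa XYaa YXaa YYaa.
transitivity (circ_cos q t ^+ 2 + q * circ_sin q t ^+ 2); first ring.
exact: circ_cos_sin.
Qed.

Lemma col_rotate_gram_out X Y a t x y : x != a -> y != a ->
  ((col_rotate X Y a t)^T *m col_rotate X Y a t) x y = (X^T *m X) x y.
Proof.
move=> xa ya; rewrite !trmx_mulmxE; apply: eq_bigr => p _.
by rewrite !mxE (negbTE xa) (negbTE ya).
Qed.

Lemma col_rotate_orthonormal X Y a t : X^T *m X = 1%:M ->
  (forall y, (Y^T *m X) a y = 0) ->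
  (col_rotate X Y a t)^T *m col_rotate X Y a t = 1%:M.
Proof.
move=> XX YX; have XXE x y : (X^T *m X) x y = (x == y)%:R by rewrite XX mxE.
have gram_a y : y != a -> ((col_rotate X Y a t)^T *m col_rotate X Y a t) a y = 0.
  move=> ya; rewrite trmx_mulmxE; under eq_bigr do rewrite !mxE eqxx (negbTE ya).
  by rewrite sum_combl -!trmx_mulmxE XXE YX eq_sym (negbTE ya) !mulr0 addr0.
apply/matrixP => x y; rewrite [RHS]mxE.
have [->|xa] := eqVneq x a; have [->|ya] := eqVneq y a.
- by rewrite col_rotate_gram_aa ?XXE ?eqxx.
- by rewrite gram_a // eq_sym (negbTE ya).
- by rewrite trmx_mulmxC gram_a // (negbTE xa).
- by rewrite col_rotate_gram_out // XXE.
Qed.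

Definition plane_rotate X a b t : 'M[R]_(m, r) := \matrix_(p, j)
  (if j == a then circ_cos 1 t * X p a + circ_sin 1 t * X p b
   else if j == b then - circ_sin 1 t * X p a + circ_cos 1 t * X p b
   else X p j).

Lemma plane_rotate0 X a b : plane_rotate X a b 0 = X.
Proof.
apply/matrixP => p j; rewrite mxE circ_cos0 circ_sin0 oppr0 !mul1r !mul0r addr0 add0r.
by case: ifP => [/eqP ->|_] //; case: ifP => [/eqP ->|].
Qed.

Lemma is_derive_plane_rotate X a b p j :
  is_derive (0:R) 1 (fun t => plane_rotate X a b t p j)
    (if j == a then 2 * X p b else if j == b then - (2 * X p a) else 0).
Proof.
rewrite /plane_rotate; under [fun t => _]funext do rewrite mxE.
have dcos := is_derive_circ_cos (1:R); have dsin := is_derive_circ_sin (1:R).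
case: ifP => _; first by apply: is_derive_eq; rewrite !scaler0 !add0r mulrC.
case: ifP => _; last exact: is_derive_cst.
apply: is_derive_eq; rewrite !scaler0 !add0r addr0 scalerN.
by congr (- _); exact: mulrC.
Qed.

Lemma plane_rotate_orthonormal X a b t : a != b -> X^T *m X = 1%:M ->
  (plane_rotate X a b t)^T *m plane_rotate X a b t = 1%:M.
Proof.
move=> ab XX; have ba : b != a by rewrite eq_sym.
set c := circ_cos 1 t; set s := circ_sin 1 t; set X' := plane_rotate X a b t.
have cs : c ^+ 2 + s ^+ 2 = 1 by rewrite -[s ^+ 2]mul1r circ_cos_sin.
have XXE x y : \sum_p X p x * X p y = (x == y)%:R by rewrite -trmx_mulmxE XX mxE.
have in_plane (u v u' v' : R) :
    \sum_p (u * X p a + v * X p b) * (u' * X p a + v' * X p b) = u * u' + v * v'.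
  by rewrite sum_combl !sum_combr !XXE !eqxx (negbTE ab) (negbTE ba) /=; ring.
have off_plane (u v : R) y : y != a -> y != b ->
    \sum_p (u * X p a + v * X p b) * X p y = 0.
  by move=> ya yb; rewrite sum_combl !XXE eq_sym (negbTE ya) eq_sym (negbTE yb) /=; ring.
have X'a p : X' p a = c * X p a + s * X p b by rewrite mxE eqxx.
have X'b p : X' p b = - s * X p a + c * X p b by rewrite mxE (negbTE ba) eqxx.
have X'y p y : y != a -> y != b -> X' p y = X p y.
  by move=> ya yb; rewrite mxE (negbTE ya) (negbTE yb).
have gram_a y : (X'^T *m X') a y = (a == y)%:R.
  rewrite trmx_mulmxE; have [->|ya] := eqVneq y a.
    by under eq_bigr do rewrite !X'a; rewrite in_plane -!expr2 cs.
  under eq_bigr do rewrite X'a; have [->|yb] := eqVneq y b.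
    by under eq_bigr do rewrite X'b; rewrite in_plane /=; ring.
  by under eq_bigr do rewrite X'y //; rewrite off_plane.
have gram_b y : (X'^T *m X') b y = (b == y)%:R.
  rewrite trmx_mulmxE; have [->|yb] := eqVneq y b.
    by under eq_bigr do rewrite !X'b; rewrite in_plane addrC mulrNN -!expr2 cs.
  under eq_bigr do rewrite X'b; have [->|ya] := eqVneq y a.
    by under eq_bigr do rewrite X'a; rewrite in_plane /=; ring.
  by under eq_bigr do rewrite X'y //; rewrite off_plane.
apply/matrixP => x y; rewrite [RHS]mxE.
have [->|xa] := eqVneq x a; first exact: gram_a.
have [->|xb] := eqVneq x b; first exact: gram_b.
rewrite trmx_mulmxC; have [->|ya] := eqVneq y a; first by rewrite gram_a eq_sym (negbTE xa).
have [->|yb] := eqVneq y b; first by rewrite gram_b eq_sym (negbTE xb).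
by rewrite trmx_mulmxE; under eq_bigr do rewrite !X'y //; rewrite XXE eq_sym.
Qed.

End ColumnRotations.

(** * First-order conditions of mLRPOTA(r) *)

Section Lagrange.
Variables (R : realType) (k : nat) (n : 'I_k -> nat) (r : nat) (A : tensor R n).
Local Notation var := (var R n r).
Implicit Types (U V W : var) (g : R -> var) (s : nat) (i : 'I_k) (a b : 'I_r).

Definition var_dot U V : R :=
  \sum_(i < k) \sum_(p < n i) \sum_(j < r) U i p j * V i p j.

Definition objective_grad U : var := fun i => \matrix_(p, j)
  (2 * tcontract A U j *
   \sum_(idx : tindex n | idx i == p) A idx * \prod_(m < k | m != i) U m (idx m) j).

Lemma var_dot_objective_grad U V : var_dot (objective_grad U) V =
  \sum_(j < r) 2 * tcontract A U j * \sum_(idx : tindex n) A idx *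
    \sum_(m < k) V m (idx m) j * \prod_(i < k | i != m) U i (idx i) j.
Proof.
rewrite /var_dot; under eq_bigr do rewrite exchange_big; rewrite exchange_big.
apply: eq_bigr => j _; under eq_bigr do under eq_bigr do rewrite mxE.
move: (tcontract A U j) => T; rewrite [RHS]mulr_sumr.
under [RHS]eq_bigr do rewrite mulr_sumr mulr_sumr.
rewrite [RHS]exchange_big; apply: eq_bigr => m _.
rewrite (partition_big (fun idx : tindex n => idx m) xpredT) //.
apply: eq_bigr => p _; rewrite mulr_sumr mulr_suml.
by apply: eq_bigr => idx /eqP <-; ring.
Qed.

Section CurveDerivative.
Variables (g : R -> var) (x : R) (V : var).
Hypothesis g_deriv : forall i p j, is_derive x 1 (fun t => g t i p j) (V i p j).

Let is_derive_tcontract j :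
  is_derive x 1 (fun t => tcontract A (g t) j) (\sum_(idx : tindex n) A idx *
    \sum_(m < k) V m (idx m) j * \prod_(i < k | i != m) g x i (idx i) j).
Proof.
apply: is_derive_big_sum => idx.
have dprod := is_derive_big_prod (index_enum_uniq 'I_k) (fun i => g_deriv (idx i) j).
by apply: is_derive_eq.
Qed.

Lemma is_derive_objective :
  is_derive x 1 (fun t => objective A (g t)) (var_dot (objective_grad (g x)) V).
Proof.
rewrite var_dot_objective_grad; apply: is_derive_big_sum => j.
have dtc := is_derive_tcontract j; apply: is_derive_eq.
by rewrite -scalerDl -mulr2n mulr_natl.
Qed.

End CurveDerivative.
Arguments is_derive_objective {g x V}.

Lemma is_derive_var_shift U V (x : R) i p j :
  is_derive x 1 (fun t => var_shift U V t i p j) (V i p j).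
Proof.
rewrite /var_shift; under [fun t => _]funext do rewrite !mxE.
by apply: is_derive_eq; rewrite add0r mul1r scaler0 add0r [_%:A]mulr1.
Qed.

Lemma var_shift0 U V : var_shift U V 0 = U.
Proof.
by apply: functional_extensionality_dep => i; rewrite /var_shift scale0r addr0.
Qed.

Lemma dirderiv_objective U V :
  dirderiv (objective A) U V = var_dot (objective_grad U) V.
Proof.
rewrite /dirderiv derive1E -{2}(var_shift0 U V).
exact/derive_val/is_derive_objective/is_derive_var_shift.
Qed.

Definition cfun_deriv (c : 'I_k * 'I_r * 'I_r) U V : R :=
  let: (i, a, b) := c in ((V i)^T *m U i + (U i)^T *m V i) a b.

Lemma dirderiv_cfun c U V : dirderiv (cfun c) U V = cfun_deriv c U V.
Proof.
case: c => [[i a] b]; rewrite /dirderiv derive1E /cfun_deriv /cfun.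
have -> : (fun t => ((var_shift U V t i)^T *m var_shift U V t i) a b - (a == b)%:R)
    = fun t => \sum_p var_shift U V t i p a * var_shift U V t i p b - (a == b)%:R.
  by apply/funext => t; rewrite mxE; congr (_ - _); apply: eq_bigr => p _; rewrite mxE.
have dsum := is_derive_big_sum (index_enum _) xpredT
  (fun p => is_deriveM (is_derive_var_shift U V 0 p a) (is_derive_var_shift U V 0 p b)).
apply: derive_val; apply: is_derive_eq.
rewrite var_shift0 subr0 !mxE -big_split; apply: eq_bigr => p _.
by rewrite !mxE addrC; congr (_ + _); apply: mulrC.
Qed.

Lemma feasible_gram {s U} : feasible s U -> forall i a b, cvalid s (i, a, b) ->
  ((U i)^T *m U i) a b = (a == b)%:R.
Proof.
move=> FU i a b v; apply/eqP; rewrite -subr_eq0; apply/eqP.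
exact: (FU (exist _ (i, a, b) v)).
Qed.

Lemma feasible_orthonormal {s U} : feasible s U ->
  forall i, (i < s)%N -> (U i)^T *m U i = 1%:M.
Proof.
move=> FU i lt_is; apply/matrixP => a b; rewrite [RHS]mxE.
have [le_ab|lt_ba] := leqP a b; first by rewrite (feasible_gram FU) // /cvalid /= ifT.
rewrite -[_ *m _]trmxK trmx_mul trmxK mxE eq_sym.
by rewrite (feasible_gram FU) // /cvalid /= ifT // ltnW.
Qed.

Lemma feasible_unit_col {s U} : feasible s U -> forall i a, ((U i)^T *m U i) a a = 1.
Proof.
by move=> FU i a; rewrite (feasible_gram FU) ?eqxx // /cvalid /=; case: ifP; rewrite ?leqnn.
Qed.

Definition licq_dir U i a b : var :=
  fun i' => if i' == i then U i' *m delta_mx a b else 0.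

Lemma cfun_deriv_licq_dir {s U i a b} : feasible s U -> cvalid s (i, a, b) ->
  forall c, cvalid s c ->
  cfun_deriv c U (licq_dir U i a b) = (c == (i, a, b))%:R * (1 + (a == b)%:R).
Proof.
move=> FU + [[i' a'] b']; rewrite /cfun_deriv /licq_dir !xpair_eqE.
have [->|ne] := eqVneq i' i; last by rewrite trmx0 mul0mx mulmx0 addr0 mxE mul0r.
rewrite trmx_mul trmx_delta -[X in X + _]mulmxA [X in _ + X]mulmxA mxE.
rewrite mul_delta_mxE mulmx_deltaE.
rewrite /cvalid /=; case: ifP => [lt_is le_ab le_ab' | _ /eqP eq_ab /eqP eq_ab'].
  rewrite (feasible_orthonormal FU lt_is) !mxE.
  have [->|ne_a] := eqVneq a' a; have [->|ne_b] := eqVneq b' b;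
    rewrite ?eqxx ?mulr1 ?mul0r ?mulr0 ?addr0 ?add0r /=.
  - by case: (a == b); rewrite ?mulr1 ?mul0r ?add0r ?addr0 mul1r // addrC.
  - by have [->|] := eqVneq a b; rewrite ?mul0r // eq_sym (negbTE ne_b) mulr0.
  - by have [<-|] := eqVneq a b; rewrite ?mulr0 // (negbTE ne_a) mul0r.
  - have [ea'b|] := eqVneq a' b; rewrite ?mul0r //.
    have [eab'|] := eqVneq a b'; rewrite ?mulr0 //; subst a' b'.
    by case/negP: ne_a; rewrite -val_eqE /= eqn_leq le_ab le_ab'.
subst b b'; rewrite andbb eqxx.
have [->|ne_a] := eqVneq a' a; last by rewrite !mul0r mulr0 addr0.
by rewrite (feasible_unit_col FU) mulr1 mul1r.
Qed.

Lemma feasible_LICQ s U : feasible s U -> LICQ s U.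
Proof.
move=> FU lam lamE [[[i a] b] v]; have := lamE (licq_dir U i a b).
under eq_bigr => c _ do rewrite dirderiv_cfun (cfun_deriv_licq_dir FU v (valP c)).
rewrite (bigD1 (exist _ (i, a, b) v : clabel k r s)) //= eqxx mul1r.
rewrite big1 ?addr0 => [|c ne_c]; last first.
  suff /negbTE -> : val c != (i, a, b) by rewrite mul0r mulr0.
  by apply: contra ne_c => /eqP val_c; apply/eqP/val_inj.
move/eqP; rewrite mulf_eq0 paddr_eq0 ?ler01 ?ler0n // oner_eq0 orbF.
by move/eqP.
Qed.

Lemma local_max_tangent s U g V : local_maximizer s A U ->
  (forall t, feasible s (g t)) ->
  (forall i p j, is_derive (0:R) 1 (fun t => g t i p j) (V i p j)) -> g 0 = U ->
  var_dot (objective_grad U) V = 0.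
Proof.
move=> [_ [e [e_gt0 Umax]]] g_feas g_deriv g0.
have := is_derive_objective g_deriv; rewrite g0 => /is_derive_local_max; apply.
have g_near : \forall t \near 0, forall i p j, `|g t i p j - U i p j| < e.
  apply: (@filter_forall R _ (fun i t => forall p j, `|g t i p j - U i p j| < e)
    (nbhs (0:R)) _) => i.
  apply: (@filter_forall R _ (fun p t => forall j, `|g t i p j - U i p j| < e)
    (nbhs (0:R)) _) => p.
  apply: (@filter_forall R _ (fun j t => `|g t i p j - U i p j| < e)
    (nbhs (0:R)) _) => j.
  have [/derivable1_diffP /differentiable_continuous g_cont _] := g_deriv i p j.
  by rewrite -g0; exact: cvgr_distC_lt.
apply: filterS g_near => t g_close /=; rewrite g0; exact: Umax (g_feas t) g_close.
Qed.

Lemma feasible_mode_update {s U} i0 (Z : var) : feasible s U ->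
  (forall x y, cvalid s (i0, x, y) -> ((Z i0)^T *m Z i0) x y = (x == y)%:R) ->
  feasible s (fun i => if i == i0 then Z i else U i).
Proof.
move=> FU Zi0 [[[i x] y] v]; apply/eqP; rewrite /cfun subr_eq0; apply/eqP.
case: eqVneq => [e|_]; last exact: feasible_gram FU _ _ _ v.
by move: v; rewrite e; exact: Zi0.
Qed.

Lemma var_dot_mode U i0 (D : var) :
  var_dot U (fun i => if i == i0 then D i else 0) = \sum_p \sum_j U i0 p j * D i0 p j.
Proof.
rewrite /var_dot (bigD1 i0) //= eqxx [X in _ + X]big1 ?addr0 // => i /negbTE ->.
by apply: big1 => p _; apply: big1 => j _; rewrite mxE mulr0.
Qed.

Lemma mode_curve_tangent {s U i0} {h : forall i, R -> 'M[R]_(n i, r)}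
    {dh : forall i, 'I_(n i) -> 'I_r -> R} :
  local_maximizer s A U ->
  (forall t, feasible s (fun i => if i == i0 then h i t else U i)) ->
  h i0 0 = U i0 ->
  (forall p j, is_derive (0:R) 1 (fun t => h i0 t p j) (dh i0 p j)) ->
  \sum_p \sum_j objective_grad U i0 p j * dh i0 p j = 0.
Proof.
move=> Umax h_feas h0 h_deriv.
have := var_dot_mode (objective_grad U) i0 (fun i => \matrix_(p, j) dh i p j).
under [RHS]eq_bigr do under eq_bigr do rewrite mxE.
move=> <-; apply: local_max_tangent Umax h_feas _ _.
- move=> i; case: eqVneq => [->|_] p j /=; first by rewrite mxE; exact: h_deriv.
  by rewrite mxE; exact: is_derive_cst.
- by apply: functional_extensionality_dep => i; case: eqVneq => [->|].
Qed.

Lemma grad_col_orthogonal {s U W i0 a} : local_maximizer s A U ->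
  ((W i0)^T *m U i0) a a = 0 ->
  ((i0 < s)%N -> forall y, ((W i0)^T *m U i0) a y = 0) ->
  ((objective_grad U i0)^T *m W i0) a a = 0.
Proof.
move=> Umax WUaa WU; have FU := Umax.1.
have curve_feas t : feasible s (fun i => if i == i0 then col_rotate (U i) (W i) a t else U i).
  apply: (feasible_mode_update FU) => x y.
  have [lt_is _|ge_is] := ltnP i0 s.
    rewrite col_rotate_orthonormal ?mxE //; last exact: WU.
    by rewrite (feasible_orthonormal FU lt_is).
  rewrite /cvalid /= ltnNge ge_is => /eqP <-.
  have [->|xa] := eqVneq x a.
    by rewrite col_rotate_gram_aa ?(feasible_unit_col FU) ?eqxx.
  by rewrite col_rotate_gram_out // (feasible_unit_col FU) eqxx.
have := mode_curve_tangent (dh := fun i p j => if j == a then 2 * W i p a else 0)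
  Umax curve_feas (col_rotate0 _ _ _) (is_derive_col_rotate _ _ _).
under eq_bigr do rewrite sum_mul_if1.
rewrite trmx_mulmxE => tangent.
have : 2 * \sum_p objective_grad U i0 p a * W i0 p a = 0.
  by rewrite -[RHS]tangent mulr_sumr; apply: eq_bigr => p _; ring.
lra.
Qed.

Definition grad_gram U i : 'M[R]_r := (U i)^T *m objective_grad U i.

Lemma grad_gram_sym {s U i0} : local_maximizer s A U -> (i0 < s)%N ->
  forall a b, grad_gram U i0 a b = grad_gram U i0 b a.
Proof.
move=> Umax lt_is a b; have FU := Umax.1; have [<- //|ab] := eqVneq a b.
have curve_feas t :
    feasible s (fun i => if i == i0 then plane_rotate (U i) a b t else U i).
  apply: (feasible_mode_update FU) => x y _.
  by rewrite plane_rotate_orthonormal ?mxE ?(feasible_orthonormal FU lt_is).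
have := mode_curve_tangent
  (dh := fun i p j => if j == a then 2 * U i p b else if j == b then - (2 * U i p a) else 0)
  Umax curve_feas (plane_rotate0 _ _ _) (is_derive_plane_rotate _ _ _).
under eq_bigr do rewrite sum_mul_if2 //.
rewrite !trmx_mulmxE => tangent.
have : 2 * \sum_p U i0 p b * objective_grad U i0 p a -
       2 * \sum_p U i0 p a * objective_grad U i0 p b = 0.
  by rewrite -[RHS]tangent !mulr_sumr -sumrB; apply: eq_bigr => p _; ring.
lra.
Qed.

Lemma objective_grad_orthonormal {s U i} : local_maximizer s A U -> (i < s)%N ->
  objective_grad U i = U i *m grad_gram U i.
Proof.
move=> Umax lt_is; have FU := Umax.1.
pose W : var := fun i' => objective_grad U i' - U i' *m grad_gram U i'.
have WU0 : (W i)^T *m U i = 0.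
  rewrite raddfB /= mulmxBl trmx_mul -mulmxA (feasible_orthonormal FU lt_is).
  by rewrite mulmx1 /grad_gram trmx_mul trmxK subrr.
have WU a y : ((W i)^T *m U i) a y = 0 by rewrite WU0 mxE.
apply/eqP; rewrite -subr_eq0; apply/eqP; apply: residual_eq0 => a.
  exact: (grad_col_orthogonal Umax (WU a a) (fun _ => WU a)).
by rewrite -/(W i) WU0 mul0mx mxE.
Qed.

Lemma objective_grad_oblique {s U i} : local_maximizer s A U -> ~~ (i < s)%N ->
  forall p a, objective_grad U i p a = U i p a * grad_gram U i a a.
Proof.
move=> Umax ge_is p a; have FU := Umax.1.
pose K i' := diag_mx (\row_b grad_gram U i' b b).
pose W : var := fun i' => objective_grad U i' - U i' *m K i'.
have WE q b : W i q b = objective_grad U i q b - U i q b * grad_gram U i b b.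
  rewrite /W /K mul_mx_diag.
  by move: (objective_grad U i) (grad_gram U i) => G M; rewrite !mxE.
have WUbb b : ((W i)^T *m U i) b b = 0.
  rewrite trmx_mulmxE; under eq_bigr do rewrite WE mulrBl mulrAC.
  rewrite sumrB -mulr_suml -!trmx_mulmxE (feasible_unit_col FU) mul1r.
  by rewrite trmx_mulmxC subrr.
have WU b : (i < s)%N -> forall y, ((W i)^T *m U i) b y = 0 by rewrite (negbTE ge_is).
have W0 : W i = 0.
  apply: residual_eq0 => b; first exact: grad_col_orthogonal Umax (WUbb b) (WU b).
  by rewrite mul_mx_diag mxE -/(W i) WUbb mul0r.
by apply/eqP; rewrite -subr_eq0 -WE W0 mxE.
Qed.

Definition multiplier U (c : 'I_k * 'I_r * 'I_r) : R :=
  let: (i, a, b) := c in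
  if a == b then grad_gram U i a a / 2 else grad_gram U i a b.

Lemma mode_kkt_identity s U V i : local_maximizer s A U ->
  \sum_p \sum_j objective_grad U i p j * V i p j =
  \sum_a \sum_(b | cvalid s (i, a, b)) multiplier U (i, a, b) * cfun_deriv (i, a, b) U V.
Proof.
move=> Umax; set M := grad_gram U i; set N := (U i)^T *m V i.
have derivE a b : cfun_deriv (i, a, b) U V = N a b + N b a.
  by rewrite /cfun_deriv mxE trmx_mulmxC addrC.
under [RHS]eq_bigr do under eq_bigr do rewrite derivE.
have [lt_is|ge_is] := ltnP i s.
  rewrite sum_mul_entries (objective_grad_orthonormal Umax lt_is) trmx_mul -mulmxA.
  rewrite -/N -sum_mul_entries.
  (* the multipliers form the upper triangle L of M = L + L^T *)
  pose L a b := if (a <= b)%N then multiplier U (i, a, b) else 0.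
  have ML a b : M a b = L a b + L b a.
    rewrite /L /multiplier; case: ltngtP => [lt_ab|lt_ba|/val_inj ->].
    - by rewrite (_ : a == b = false) ?addr0 // -val_eqE /= ltn_eqF.
    - rewrite (_ : b == a = false); last by rewrite -val_eqE /= ltn_eqF.
      by rewrite add0r (grad_gram_sym Umax lt_is).
    - by rewrite eqxx -splitr.
  transitivity (\sum_a \sum_b L a b * (N a b + N b a)).
    under eq_bigr do under eq_bigr do rewrite ML mulrDl.
    under eq_bigr do rewrite big_split /=.
    rewrite big_split /= [X in _ + X]exchange_big -big_split /=.
    by apply: eq_bigr => a _; rewrite -big_split /=; apply: eq_bigr => b _; ring.
  apply: eq_bigr => a _; rewrite [RHS]big_mkcond; apply: eq_bigr => b _.
  have -> : cvalid s (i, a, b) = (a <= b)%N by rewrite /cvalid /= ifT.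
  by rewrite /L; case: ifP; rewrite ?mul0r.
have ge_is' : ~~ (i < s)%N by rewrite -leqNgt.
have oblE := objective_grad_oblique Umax ge_is'.
transitivity (\sum_p \sum_j U i p j * M j j * V i p j).
  by apply: eq_bigr => p _; apply: eq_bigr => j _; rewrite oblE.
rewrite exchange_big /=; apply: eq_bigr => a _.
rewrite (eq_bigl (pred1 a)) => [|b]; last by rewrite /cvalid /= ifN // eq_sym.
rewrite big_pred1_eq /multiplier eqxx.
transitivity (M a a * N a a); last by field.
by rewrite [N a a]trmx_mulmxE mulr_sumr; apply: eq_bigr => p _; ring.
Qed.

Lemma sum_clabel s (F : 'I_k * 'I_r * 'I_r -> R) :
  \sum_(c : clabel k r s) F (val c) =
  \sum_i \sum_a \sum_(b | cvalid s (i, a, b)) F (i, a, b).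
Proof.
transitivity (\sum_(x | cvalid s x) F x).
  rewrite [RHS](reindex_omap (val : clabel k r s -> _) insub) => [|x vx]; last first.
    by rewrite insubT.
  by apply: eq_bigl => -[x vx] /=; rewrite vx insubT /=; apply/esym/eqP.
transitivity (\sum_(ia : 'I_k * 'I_r) \sum_(b | cvalid s (ia, b)) F (ia, b)).
  by rewrite pair_big_dep; apply: eq_big => -[ia b].
by rewrite [RHS]pair_big; apply: eq_bigr => -[i a].
Qed.

Lemma local_maximizer_KKT s U : local_maximizer s A U ->
  KKT A U [ffun c : clabel k r s => multiplier U (val c)].
Proof.
move=> Umax; split=> [|V]; first exact: Umax.1.
under eq_bigr do rewrite ffunE dirderiv_cfun.
rewrite dirderiv_objective (sum_clabel s (fun c => multiplier U c * cfun_deriv c U V)).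
rewrite /var_dot; apply: eq_bigr => i _.
exact: mode_kkt_identity.
Qed.

Lemma LICQ_KKT_unique s U (lam mu : {ffun clabel k r s -> R}) :
  LICQ s U -> KKT A U lam -> KKT A U mu -> mu = lam.
Proof.
move=> licq [_ lam_grad] [_ mu_grad]; apply/ffunP => c; apply/eqP; rewrite -subr_eq0.
apply/eqP; have := licq [ffun c => mu c - lam c] _ c; rewrite ffunE; apply=> V.
under eq_bigr do rewrite ffunE mulrBl.
by rewrite sumrB -mu_grad -lam_grad subrr.
Qed.

End Lagrange.

Theorem proposition4p2 (R : realType) (k : nat) (n : 'I_k -> nat) (r s : nat)
    (A : tensor R n) :
  (1 <= s <= k)%N ->
  (forall i : 'I_k, (i < s)%N -> (r <= n i)%N) ->
  (forall U : var R n r, feasible s U -> LICQ s U) /\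
  (forall U : var R n r, local_maximizer s A U ->
     exists lam : {ffun clabel k r s -> R},
       KKT A U lam /\ forall mu : {ffun clabel k r s -> R}, KKT A U mu -> mu = lam).
Proof.
(* the size hypotheses only ensure that feasible points exist *)
move=> _ _; split=> [U|U Umax]; first exact: feasible_LICQ.
exists [ffun c => multiplier A U (val c)]; split; first exact: local_maximizer_KKT.
move=> mu; apply: LICQ_KKT_unique; last exact: local_maximizer_KKT.
exact: feasible_LICQ Umax.1.
Qed.
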